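(* For every even $n\geq1$, the variety $Y_{\mathbb{A}_n}$ is isomorphic to $X_n(1)\times(\mathbb{A}^1\setminus\{0\})$.
   Context: For $\alpha$ invertible, $X_n(\alpha)$ is the affine variety in variables $x_1,\dots,x_n,x'_1,\dots,x'_n$ defined by $x_1x'_1=1+\alpha x_2$, $x_ix'_i=1+x_{i-1}x_{i+1}$ for $2\le i\le n-1$, $x_nx'_n=1+x_{n-1}$. $Y_{\mathbb{A}_n}$ is the variety in variables $(\alpha,x_1,\dots,x_n,x'_1,\dots,x'_n)$ with $\alpha\neq0$ defined by the same equations (the union of the $X_n(\alpha)$ over invertible $\alpha$). *)

From HB Require Import structures.
From mathcomp Require Import all_boot all_order all_algebra.
From mathcomp Require Import mpoly.
Set Implicit Arguments. Unset Strict Implicit. Unset Printing Implicit Defensive.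
Import GRing.Theory.
Local Open Scope ring_scope.

Section Varieties.
Variable k : closedFieldType.
Variable n : nat.

(* A point of the ambient space k^(2n+1): (u, (x, x')) where u is the
   distinguished coordinate that is required to be invertible
   (u = alpha for Y_{A_n}, u = t for the factor A^1 \ {0} of X_n(1) x (A^1\{0})),
   x = (x_1,...,x_n) and x' = (x'_1,...,x'_n) stored 0-based: x_i = x`_(i-1). *)
Definition pt := (k * (n.-tuple k * n.-tuple k))%type.

Definition eqsX (al : k) (x x' : n.-tuple k) : Prop :=
  [/\ x`_0 * x'`_0 = 1 + al * x`_1,
      (forall i : nat, (1 <= i)%N -> (i.+1 < n)%N ->
         x`_i * x'`_i = 1 + x`_i.-1 * x`_i.+1)
    & x`_n.-1 * x'`_n.-1 = 1 + x`_n.-2].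

Definition Y_An (p : pt) : Prop := p.1 != 0 /\ eqsX p.1 p.2.1 p.2.2.

Definition X1_Gm (p : pt) : Prop := p.1 != 0 /\ eqsX 1 p.2.1 p.2.2.

(* Regular functions on a locally closed set {u <> 0} are polynomials in
   u^-1, u, x, x'.  Coordinate vector (u^-1, u, x_1..x_n, x'_1..x'_n). *)
Definition coordv (p : pt) : 'I_(2 * n).+2 -> k := fun i =>
  if (i == 0 :> nat) then p.1^-1
  else if (i == 1 :> nat) then p.1
  else if (i < n.+2)%N then p.2.1`_(i - 2)
  else p.2.2`_(i - n.+2).

Definition lmap := ({mpoly k[(2 * n).+2]} *
  (n.-tuple {mpoly k[(2 * n).+2]} * n.-tuple {mpoly k[(2 * n).+2]}))%type.

Definition app (f : lmap) (p : pt) : pt :=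
  (f.1.@[coordv p],
   ([tuple of map (fun q : {mpoly k[(2 * n).+2]} => q.@[coordv p]) f.2.1],
    [tuple of map (fun q : {mpoly k[(2 * n).+2]} => q.@[coordv p]) f.2.2])).

Definition var_iso (A B : pt -> Prop) : Prop :=
  exists f g : lmap,
    [/\ (forall p, A p -> B (app f p)),
        (forall q, B q -> A (app g q)),
        (forall p, A p -> app g (app f p) = p)
      & (forall q, B q -> app f (app g q) = q)].

End Varieties.

From mathcomp Require Import all_boot all_order all_algebra.
From mathcomp Require Import mpoly zify.
Set Implicit Arguments. Unset Strict Implicit. Unset Printing Implicit Defensive.
Import GRing.Theory.
Local Open Scope ring_scope.

(* Rescaling x_i |-> u^(w_i) x_i, x'_i |-> u^(-w_i) x'_i by integer weights
   leaves every product x_i x'_i unchanged, turns the term al * x_2 of the first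
   equation into (al * u^(-w_2)) * (rescaled x_2), and preserves the other
   equations as soon as w_(i+1) = - w_(i-1) and w_(n-1) = 0.  The weights
   w_i = 0 for odd i and w_2 = 1, w_4 = -1, w_6 = 1, ... satisfy this exactly
   when n is even; with u = alpha they map X_n(alpha) onto X_n(1), and the
   opposite weights map back, both maps being polynomial in alpha, alpha^-1. *)

Section WeightedRescaling.
Variable k : closedFieldType.
Variable n : nat.

Definition scale (u : k) (s : nat -> int) (x : n.-tuple k) : n.-tuple k :=
  [tuple u ^ s i * x`_i | i < n].

Lemma nth_scale u s x j : (scale u s x)`_j = u ^ s j * x`_j.
Proof.
have [ltjn|lenj] := ltnP j n; first by rewrite (nth_mktuple _ _ (Ordinal ltjn)).
by rewrite !nth_default ?mulr0 ?size_tuple.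
Qed.

Lemma scaleK u s s' x : u != 0 -> (forall j, s' j = - s j) ->
  scale u s' (scale u s x) = x.
Proof.
move=> u0 s's; apply: val_inj; apply: (@eq_from_nth _ 0); rewrite ?size_tuple // => j _.
by rewrite !nth_scale mulrA -expfzDr // s's addNr mul1r.
Qed.

Definition rescale (s : nat -> int) (p : pt k n) : pt k n :=
  (p.1, (scale p.1 s p.2.1, scale p.1 (fun j => - s j) p.2.2)).

Lemma rescaleK s s' p : p.1 != 0 -> (forall j, s' j = - s j) ->
  rescale s' (rescale s p) = p.
Proof.
case: p => u [x x'] /= u0 s's; rewrite /rescale /= !scaleK //= => j.
by rewrite s's.
Qed.

Lemma eqsX_rescale (s : nat -> int) al u x x' : u != 0 ->
  (forall i, (1 <= i)%N -> (i.+1 < n)%N -> s i.+1 = - s i.-1) -> s n.-2 = 0 ->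
  eqsX al x x' ->
  eqsX (al * u ^ (- s 1%N)) (scale u s x) (scale u (fun j => - s j) x').
Proof.
move=> u0 recs s_last [eq_first eq_mid eq_last].
have prodK j : (scale u s x)`_j * (scale u (fun j => - s j) x')`_j = x`_j * x'`_j.
  by rewrite !nth_scale mulrACA -expfzDr // subrr mul1r.
split=> [|i i_ge1 i_lt|]; rewrite prodK.
- by rewrite eq_first nth_scale -mulrA [u ^ (- _) * _]mulrA -expfzDr // addNr mul1r.
- by rewrite eq_mid // !nth_scale mulrACA -expfzDr // recs // subrr mul1r.
- by rewrite eq_last nth_scale s_last mul1r.
Qed.

(* Coordinate 0 of [coordv] is u^-1, so negative powers use it. *)
Definition laurentX (s : int) : {mpoly k[(2 * n).+2]} :=
  match s with
  | Posz m => 'X_(inord 1) ^+ m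
  | Negz m => 'X_(inord 0) ^+ m.+1
  end.

Lemma coordv_inord (p : pt k n) :
  [/\ coordv p (inord 0) = p.1^-1, coordv p (inord 1) = p.1,
      forall i, (i < n)%N -> coordv p (inord (i + 2)) = p.2.1`_i
    & forall i, (i < n)%N -> coordv p (inord (n + 2 + i)) = p.2.2`_i].
Proof.
rewrite /coordv; split=> [||i lt_in|i lt_in]; rewrite inordK //; try lia.
- by rewrite addn2 /= !ltnS lt_in subn2.
- have -> : (n + 2 + i == 0)%N = false by lia.
  have -> : (n + 2 + i == 1)%N = false by lia.
  have -> : (n + 2 + i < n.+2)%N = false by lia.
  by congr (_`_ _); lia.
Qed.

Lemma meval_laurentX s (p : pt k n) : (laurentX s).@[coordv p] = p.1 ^ s.
Proof.
have [c0 c1 _ _] := coordv_inord p.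
by case: s => m; rewrite /laurentX rmorphXn /= mevalXU ?c0 ?c1 ?exprVn.
Qed.

Definition rescale_map (s : nat -> int) : lmap k n :=
  ('X_(inord 1),
   ([tuple laurentX (s i) * 'X_(inord (i + 2)) | i < n],
    [tuple laurentX (- s i) * 'X_(inord (n + 2 + i)) | i < n])).

Lemma app_rescale_map s p : app (rescale_map s) p = rescale s p.
Proof.
have [_ c1 cx cx'] := coordv_inord p.
rewrite /app /rescale /= mevalXU c1; congr (_, (_, _)); apply: eq_from_tnth => i;
  by rewrite tnth_map !tnth_mktuple mevalM mevalXU meval_laurentX ?cx ?cx' // (tnth_nth 0).
Qed.

End WeightedRescaling.

(* 0-based: [weight j] is the weight w_(j+1) of x_(j+1). *)
Definition weight (j : nat) : int := if odd j then (-1) ^+ j./2 else 0.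

Lemma weight_rec i : (1 <= i)%N -> weight i.+1 = - weight i.-1.
Proof.
case: i => // i _; rewrite /weight /=.
by case: (odd i); rewrite ?exprS ?mulN1r ?oppr0.
Qed.

Lemma weight_even j : ~~ odd j -> weight j = 0.
Proof. by rewrite /weight => /negbTE ->. Qed.

Theorem mainTheorem9 (k : closedFieldType) (n : nat) :
  (1 <= n)%N -> ~~ odd n -> var_iso (@Y_An k n) (@X1_Gm k n).
Proof.
move=> n_ge1 n_even.
have w_last : weight n.-2 = 0.
  by apply: weight_even; case: n n_ge1 n_even => [|[|m]] //=; rewrite negbK.
exists (rescale_map k n weight), (rescale_map k n (fun j => - weight j)); split.
- move=> [u [x x']] [/= u0 eqs]; rewrite app_rescale_map; split=> //=.
  have := eqsX_rescale u0 (fun i i_ge1 _ => weight_rec i_ge1) w_last eqs.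
  by rewrite [weight 1]/= exprN1 mulfV.
- move=> [t [x x']] [/= t0 eqs]; rewrite app_rescale_map; split=> //=.
  have := eqsX_rescale (s := fun j => - weight j) t0 _ _ eqs.
  rewrite opprK mul1r expr1z; apply=> [i i_ge1 _|]; first by rewrite weight_rec.
  by rewrite w_last oppr0.
- by move=> p [u0 _]; rewrite !app_rescale_map rescaleK.
- by move=> q [t0 _]; rewrite !app_rescale_map rescaleK // => j; rewrite opprK.
Qed.
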